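(* Let $W=\sum_{j\in[n]}p_j\mathrm B(\varepsilon_j)\in\mathbb B_n^*$ be a degradation of $Q=\sum_{i\in[m]}q_i\mathrm B(\sigma_i)\in\mathbb B_m$, where $(p_j)$ and $(q_i)$ are probability vectors and $\varepsilon_1,\dots,\varepsilon_n,\sigma_1,\dots,\sigma_m\in[0,1/2]$. Then $W$ is a $2n$-P-degradation of $Q$ if and only if there is a 1-matrix $(k_{i,j})_{m\times n}$ of pattern $(q_1,\dots,q_m;p_1,\dots,p_n)$ such that $$\sum_{i\in[m]}k_{i,j}\sigma_i=p_j\varepsilon_j\qquad\text{for every } j\in[n].$$
   Context: A BIDMC $W$ has input uniform on $\{0,1\}$, discrete output alphabet $\mathcal Y$ and transition probabilities $\Pr(y\mid x)$; its LR-profile is $P_W(\varepsilon)=\Pr\big(\mathcal L_W(y)=\varepsilon/(1-\varepsilon)\big)$ with $\mathcal L_W(\hat y)=\Pr(y=\hat y\mid x=0)/\Pr(y=\hat y\mid x=1)$, and $W\cong W'$ if LR-profiles coincide; channel identities are up to $\cong$. $W'\preccurlyeq W$ if there is a channel $T$ from the output alphabet of $W$ to that of $W'$ with $\Pr(y'\mid x'=a)=\sum_{y}\Pr(y\mid x=a)T(y'\mid y)$. $\mathrm B(\varepsilon)$ is the BSC with crossover probability $\varepsilon$; $\sum_iq_iW_i$ denotes the random switching channel (use $W_i$ with probability $q_i$ independently of the input and output the index $i$ along with the output). $\mathbb B_n$ is the set of BIDMCs equivalent to $\sum_{i\in[n]}p_i\mathrm B(\varepsilon_i)$ for a probability vector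 $(p_i)$ and $\varepsilon_i\in[0,1]$; $\mathbb B_n^*=\mathbb B_n\setminus\mathbb B_{n-1}$. $P_\epsilon(W)=\frac12\sum_{y}\min\{\Pr(y\mid x=0),\Pr(y\mid x=1)\}$ (for $\sum_ip_i\mathrm B(\varepsilon_i)$ with $\varepsilon_i\in[0,1/2]$ it equals $\sum_ip_i\varepsilon_i$). For a symmetric BIDMC $Q$ and $n\ge1$, $W$ is a $2n$-P-degradation of $Q$ ($W\preccurlyeq_{\mathrm P}Q$) if $W\in\mathbb B_n$, $W\preccurlyeq Q$ and $P_\epsilon(W)=\min\{P_\epsilon(W'):W'\in\mathbb B_n,\ W'\preccurlyeq Q\}$. A 1-matrix of pattern $(q_1,\dots,q_m;p_1,\dots,p_n)$ is a matrix $(k_{i,j})_{m\times n}$ with $k_{i,j}\ge0$, $\sum_{j}k_{i,j}=q_i$ for all $i$ and $\sum_{i}k_{i,j}=p_j$ for all $j$. *)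

From mathcomp Require Import all_boot all_order all_algebra.
From mathcomp Require Import reals.
Set Implicit Arguments. Unset Strict Implicit. Unset Printing Implicit Defensive.
Import Order.TTheory GRing.Theory Num.Theory.
Local Open Scope ring_scope.

(* A BIDMC with input alphabet {0,1} (0 = false, 1 = true) and finite output
   alphabet Y, given by its transition probabilities W x y = Pr(y | x). *)
Definition chan (R : realType) (Y : finType) := bool -> Y -> R.

Definition is_chan (R : realType) (Y : finType) (W : chan R Y) : Prop :=
  (forall x y, 0 <= W x y) /\ (forall x, \sum_(y : Y) W x y = 1).

Definition degraded (R : realType) (Y' Y : finType) (W' : chan R Y') (W : chan R Y) : Prop :=
  exists T : Y -> Y' -> R,
    [/\ (forall y y', 0 <= T y y'),
        (forall y, \sum_(y' : Y') T y y' = 1) &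
        (forall a y', W' a y' = \sum_(y : Y) W a y * T y y')].

(* LR-profile under uniform input: P_W(e) = Pr(L_W(y) = e/(1-e)).
   L_W(y) = W(y|0)/W(y|1) = e/(1-e)  iff  W(y|0) = e (W(y|0)+W(y|1))
   (with e = 1 corresponding to L_W(y) = +oo); outputs of zero probability
   are ignored. *)
Definition lr_profile (R : realType) (Y : finType) (W : chan R Y) (e : R) : R :=
  2^-1 * \sum_(y : Y | (0 < W false y + W true y)
                       && (W false y / (W false y + W true y) == e))
           (W false y + W true y).

Definition chan_equiv (R : realType) (Y Y' : finType) (W : chan R Y) (W' : chan R Y') : Prop :=
  forall e : R, lr_profile W e = lr_profile W' e.

Definition bsc (R : realType) (eps : R) (x y : bool) : R :=
  if x == y then 1 - eps else eps.

Definition switch (R : realType) (n : nat) (p eps : 'I_n -> R) : chan R ('I_n * bool)%type :=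
  fun x iy => p iy.1 * bsc (eps iy.1) x iy.2.

Definition prob_vec (R : realType) (n : nat) (p : 'I_n -> R) : Prop :=
  (forall i, 0 <= p i) /\ \sum_(i < n) p i = 1.

Definition in_B (R : realType) (n : nat) (Y : finType) (W : chan R Y) : Prop :=
  exists p eps : 'I_n -> R,
    [/\ prob_vec p, (forall i, 0 <= eps i <= 1) & chan_equiv W (switch p eps)].

Definition in_Bstar (R : realType) (n : nat) (Y : finType) (W : chan R Y) : Prop :=
  in_B n W /\ ~ in_B n.-1 W.

Definition Pe (R : realType) (Y : finType) (W : chan R Y) : R :=
  2^-1 * \sum_(y : Y) Num.min (W false y) (W true y).

Definition P_degradation (R : realType) (n : nat) (Y Z : finType)
    (W : chan R Y) (Q : chan R Z) : Prop :=
  [/\ in_B n W, degraded W Q &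
      forall (Y' : finType) (W' : chan R Y'),
        is_chan W' -> in_B n W' -> degraded W' Q -> Pe W <= Pe W'].

Definition one_matrix (R : realType) (m n : nat) (q : 'I_m -> R) (p : 'I_n -> R)
    (k : 'M[R]_(m, n)) : Prop :=
  [/\ (forall i j, 0 <= k i j),
      (forall i, \sum_(j < n) k i j = q i) &
      (forall j, \sum_(i < m) k i j = p j)].

From mathcomp Require Import all_boot all_order all_algebra.
From mathcomp Require Import reals ring lra.
Import Order.TTheory GRing.Theory Num.Theory.
Local Open Scope ring_scope.

(* For channels built from BSCs with crossovers in [0, 1/2], P_eps is the
   average crossover, and P_eps can only grow under degradation.  If W is
   obtained from Q by a channel T, the mass that T sends from component i of Q
   to component j of W gives a 1-matrix k of pattern (q; p), and comparing the
   minima of the two likelihoods on each output of W yields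
   sum_i k_ij sigma_i <= p_j eps_j.  Summing over j gives P_eps(Q) <= P_eps(W),
   so equality holds for every j exactly when P_eps(W) = P_eps(Q).  Finally
   P_eps(Q) is always attained inside B_n: merging the components of Q into
   B(P_eps(Q)) and splitting it again along p is a degradation of Q. *)

Section SwitchingChannels.
Set Implicit Arguments. Unset Strict Implicit.
Variable R : realType.

Lemma sumr_pair (I J : finType) (F : I * J -> R) :
  \sum_(y : I * J) F y = \sum_(i : I) \sum_(j : J) F (i, j).
Proof. by rewrite pair_bigA; apply: eq_bigr => -[]. Qed.

Lemma bsc_ge0 (e : R) x y : 0 <= e <= 1 -> 0 <= bsc e x y.
Proof. by move=> /andP[e0 e1]; rewrite /bsc; case: (x == y) => //; lra. Qed.

Lemma bsc_sum_out (e : R) x : \sum_(y : bool) bsc e x y = 1.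
Proof. by rewrite big_bool /bsc; case: x => /=; rewrite ?subrK // addrC subrK. Qed.

Lemma bsc_sum_in (e : R) y : \sum_(x : bool) bsc e x y = 1.
Proof. by rewrite big_bool /bsc; case: y => /=; rewrite ?subrK // addrC subrK. Qed.

Lemma switch_ge0 n (p eps : 'I_n -> R) x y :
  (forall j, 0 <= p j) -> (forall j, 0 <= eps j <= 1) -> 0 <= switch p eps x y.
Proof. by move=> p0 e01; rewrite mulr_ge0 ?bsc_ge0. Qed.

Lemma switch_is_chan n (p eps : 'I_n -> R) :
  prob_vec p -> (forall j, 0 <= eps j <= 1) -> is_chan (switch p eps).
Proof.
move=> [p0 p1] e01; split=> [x y|x]; first exact: switch_ge0.
rewrite sumr_pair -[RHS]p1; apply: eq_bigr => j _.
by rewrite /switch /= -big_distrr /= bsc_sum_out mulr1.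
Qed.

Lemma switch_sum_in n (p eps : 'I_n -> R) y :
  \sum_(x : bool) switch p eps x y = p y.1.
Proof. by rewrite /switch -big_distrr /= bsc_sum_in mulr1. Qed.

Lemma min_switch n (p eps : 'I_n -> R) y :
  0 <= p y.1 -> 0 <= eps y.1 <= 2^-1 ->
  Num.min (switch p eps false y) (switch p eps true y) = p y.1 * eps y.1.
Proof.
move=> p0 /andP[e0 e2]; have le_e_1e : p y.1 * eps y.1 <= p y.1 * (1 - eps y.1).
  by rewrite ler_wpM2l //; lra.
by rewrite /switch /bsc; case: y.2 => /=; [exact: min_l | exact: min_r].
Qed.

Lemma Pe_switch n (p eps : 'I_n -> R) : (forall j, 0 <= p j) ->
  (forall j, 0 <= eps j <= 2^-1) -> Pe (switch p eps) = \sum_j p j * eps j.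
Proof.
move=> p0 e0; rewrite /Pe sumr_pair.
under eq_bigr => j _ do under eq_bigr => b _ do rewrite min_switch //.
by rewrite big_distrr; apply: eq_bigr => j _; rewrite big_bool /=; field.
Qed.

Lemma sum_min_le_min (Y : finType) {a b T : Y -> R} : (forall y, 0 <= T y) ->
  \sum_y Num.min (a y) (b y) * T y <= Num.min (\sum_y a y * T y) (\sum_y b y * T y).
Proof.
move=> T0; rewrite le_min; apply/andP; split; apply: ler_sum => y _;
  by rewrite ler_wpM2r // ge_min lexx ?orbT.
Qed.

Lemma Pe_degraded (Y Y' : finType) (Q : chan R Y) (W : chan R Y') :
  (forall x y, 0 <= Q x y) -> degraded W Q -> Pe Q <= Pe W.
Proof.
move=> Q0 [T [T0 T1 TW]]; rewrite /Pe ler_wpM2l ?invr_ge0 ?ler0n //.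
have -> : \sum_y Num.min (Q false y) (Q true y) =
          \sum_y \sum_y' Num.min (Q false y) (Q true y) * T y y'.
  by apply: eq_bigr => y _; rewrite -big_distrr /= T1 mulr1.
rewrite exchange_big /=; apply: ler_sum => y' _; rewrite !TW.
exact: sum_min_le_min (T0^~ y').
Qed.

Lemma switch_const_degraded n m (p' : 'I_n -> R) (q sigma : 'I_m -> R) :
  prob_vec p' -> prob_vec q ->
  degraded (switch p' (fun=> \sum_i q i * sigma i)) (switch q sigma).
Proof.
move=> [p'0 p'1] [_ q1].
exists (fun y z => p' z.1 * (y.2 == z.2)%:R); split.
- by move=> y z; rewrite mulr_ge0.
- move=> [i b]; rewrite sumr_pair -[RHS]p'1; apply: eq_bigr => j _.
  by rewrite big_bool; case: b; rewrite /= ?mulr0 ?mulr1 ?addr0 ?add0r.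
move=> x [j b']; rewrite sumr_pair.
have pick_b' i : \sum_b switch q sigma x (i, b) * (p' (j, b').1 * ((i, b).2 == (j, b').2)%:R)
    = p' j * switch q sigma x (i, b').
  by rewrite big_bool; case: b' => /=; rewrite ?mulr0 ?mulr1 ?addr0 ?add0r mulrC.
rewrite (eq_bigr _ (fun i _ => pick_b' i)).
rewrite -big_distrr /switch /=; congr (_ * _); rewrite /bsc; case: (x == b') => //.
under [RHS]eq_bigr do rewrite mulrBr mulr1.
by rewrite sumrB q1.
Qed.

Lemma one_matrix_weighted_sum m n (q : 'I_m -> R) (p : 'I_n -> R) k (sigma : 'I_m -> R) :
  one_matrix q p k -> \sum_j \sum_i k i j * sigma i = \sum_i q i * sigma i.
Proof.
case=> _ krow _; rewrite exchange_big; apply: eq_bigr => i _.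
by rewrite -big_distrl /= krow.
Qed.

Lemma convex_sum_bounds n (q x : 'I_n -> R) (c : R) :
  prob_vec q -> (forall i, 0 <= x i <= c) -> 0 <= \sum_i q i * x i <= c.
Proof.
move=> [q0 q1] x0c; have x0 i : 0 <= x i by case/andP: (x0c i).
rewrite sumr_ge0 => [|i _]; last exact: mulr_ge0.
rewrite -[c]mul1r -q1 big_distrl ler_sum // => i _.
by rewrite ler_wpM2l //; case/andP: (x0c i).
Qed.

Lemma eq_of_ler_sum (I : finType) (F G : I -> R) :
  (forall i, F i <= G i) -> \sum_i G i <= \sum_i F i -> forall i, F i = G i.
Proof.
move=> leFG leGF i; apply/eqP; rewrite eq_sym -subr_eq0; apply/eqP.
have GF0 j : 0 <= G j - F j by rewrite subr_ge0.
have sum_GF0 : \sum_j (G j - F j) = 0.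
  by apply/eqP; rewrite eq_le sumr_ge0 // andbT sumrB subr_le0.
exact: (psumr_eq0P (P := xpredT) (fun j _ => GF0 j) sum_GF0).
Qed.

Section MassMatrix.
Variables (n m : nat) (p eps : 'I_n -> R) (q sigma : 'I_m -> R).
Variable T : 'I_m * bool -> 'I_n * bool -> R.
Hypothesis T0 : forall y z, 0 <= T y z.
Hypothesis T1 : forall y, \sum_z T y z = 1.
Hypothesis TW : forall x z, switch p eps x z = \sum_y switch q sigma x y * T y z.

(* Under uniform input, component i of Q is used with probability q i and each
   of its two outputs with probability 1/2. *)
Definition mass_matrix : 'M[R]_(m, n) :=
  \matrix_(i, j) (2^-1 * q i * \sum_(b : bool) \sum_(b' : bool) T (i, b) (j, b')).

Lemma mass_matrix_row i : \sum_j mass_matrix i j = q i.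
Proof.
under eq_bigr do rewrite mxE.
rewrite -big_distrr /= exchange_big big_bool /= -!sumr_pair !T1.
by field.
Qed.

Lemma mass_matrix_col j : \sum_i mass_matrix i j = p j.
Proof.
have out_mass : \sum_(x : bool) \sum_(b' : bool) switch p eps x (j, b') = 2 * p j.
  under eq_bigr do rewrite /switch /= -big_distrr /= bsc_sum_out mulr1.
  by rewrite big_bool mulr2n mulrDl !mul1r.
have in_mass : \sum_(x : bool) \sum_(b' : bool) switch p eps x (j, b')
    = \sum_i q i * \sum_(b : bool) \sum_(b' : bool) T (i, b) (j, b').
  under eq_bigr do under eq_bigr do rewrite TW.
  rewrite exchange_big /=; under eq_bigr do rewrite exchange_big /=.
  rewrite exchange_big /= sumr_pair; apply: eq_bigr => i _; rewrite big_distrr /=.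
  apply: eq_bigr => b _; rewrite big_distrr /=; apply: eq_bigr => b' _.
  by rewrite -big_distrl /= switch_sum_in.
under eq_bigr do rewrite mxE -mulrA.
by rewrite -big_distrr /= -in_mass out_mass mulrA mulVf ?pnatr_eq0 ?mul1r.
Qed.

Hypothesis p0 : forall j, 0 <= p j.
Hypothesis eps0 : forall j, 0 <= eps j <= 2^-1.
Hypothesis q0 : forall i, 0 <= q i.
Hypothesis sigma0 : forall i, 0 <= sigma i <= 2^-1.

Lemma mass_matrix_ge0 i j : 0 <= mass_matrix i j.
Proof.
rewrite mxE !mulr_ge0 ?invr_ge0 ?ler0n //.
by apply: sumr_ge0 => b _; apply: sumr_ge0.
Qed.

Lemma mass_matrix_crossover_le j :
  \sum_i mass_matrix i j * sigma i <= p j * eps j.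
Proof.
have out_le b' : \sum_i \sum_b q i * sigma i * T (i, b) (j, b') <= p j * eps j.
  rewrite -(sumr_pair (fun y => q y.1 * sigma y.1 * T y (j, b'))).
  rewrite -(min_switch (p := p) (y := (j, b'))) // !TW.
  apply: le_trans (sum_min_le_min (T0^~ (j, b'))).
  by apply: ler_sum => -[i b] _; rewrite min_switch.
have -> : \sum_i mass_matrix i j * sigma i = 2^-1 *
    (\sum_i \sum_b q i * sigma i * T (i, b) (j, true)
     + \sum_i \sum_b q i * sigma i * T (i, b) (j, false)).
  rewrite -big_split big_distrr /=; apply: eq_bigr => i _.
  by rewrite mxE !big_bool /=; field.
by have := out_le true; have := out_le false; lra.
Qed.

End MassMatrix.

Lemma degraded_switch_one_matrix n m (p eps : 'I_n -> R) (q sigma : 'I_m -> R) :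
  (forall j, 0 <= p j) -> (forall j, 0 <= eps j <= 2^-1) ->
  (forall i, 0 <= q i) -> (forall i, 0 <= sigma i <= 2^-1) ->
  degraded (switch p eps) (switch q sigma) ->
  exists2 k : 'M[R]_(m, n), one_matrix q p k &
    forall j, \sum_i k i j * sigma i <= p j * eps j.
Proof.
move=> p0 eps0 q0 sigma0 [T [T0 T1 TW]]; exists (mass_matrix q T).
  by split=> [i j|i|j]; [exact: mass_matrix_ge0 | exact: mass_matrix_row | exact: mass_matrix_col].
exact: mass_matrix_crossover_le.
Qed.

End SwitchingChannels.

Theorem theorem2 (R : realType) (n m : nat)
    (p eps : 'I_n -> R) (q sigma : 'I_m -> R) :
  prob_vec p -> prob_vec q ->
  (forall j, 0 <= eps j <= 2^-1) ->
  (forall i, 0 <= sigma i <= 2^-1) ->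
  in_Bstar n (switch p eps) ->
  degraded (switch p eps) (switch q sigma) ->
  (P_degradation n (switch p eps) (switch q sigma) <->
   exists k : 'M[R]_(m, n),
     one_matrix q p k /\
     forall j : 'I_n, \sum_(i < m) k i j * sigma i = p j * eps j).
Proof.
move=> [p0 p1] [q0 q1] eps0 sigma0 [inW _] degWQ.
have PeW := Pe_switch p0 eps0; have PeQ := Pe_switch q0 sigma0.
have sigma01 i : 0 <= sigma i <= 1 by have := sigma0 i; lra.
split=> [[_ _ Pe_min] | [k [kQ k_eq]]].
- have [k kQ k_le] := degraded_switch_one_matrix p0 eps0 q0 sigma0 degWQ.
  exists k; split => //; apply: eq_of_ler_sum k_le _.
  rewrite (one_matrix_weighted_sum _ kQ) -PeW; set s := \sum_i q i * sigma i.
  have s_half : 0 <= s <= 2^-1 by apply: convex_sum_bounds.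
  have s01 : 0 <= s <= 1 by lra.
  have W'_in_B : in_B n (switch p (fun=> s)) by exists p, (fun=> s).
  have W'_chan : is_chan (switch p (fun=> s)) by apply: switch_is_chan.
  have W'_deg : degraded (switch p (fun=> s)) (switch q sigma).
    exact: switch_const_degraded.
  have := Pe_min _ _ W'_chan W'_in_B W'_deg.
  by rewrite (Pe_switch p0 (fun=> s_half)) -big_distrl /= p1 mul1r.
- have PeWQ : Pe (switch p eps) = Pe (switch q sigma).
    by rewrite PeW PeQ -(one_matrix_weighted_sum _ kQ); under eq_bigr do rewrite -k_eq.
  split=> // Y' W' _ _ degW'Q; rewrite PeWQ.
  by apply: Pe_degraded degW'Q => x y; apply: switch_ge0.
Qed.
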